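(* Let $\mathcal X$ and $\mathcal Y$ be Banach spaces, let $A$ be a closed, densely defined linear operator from $\operatorname{dom}A\subset\mathcal X$ to $\mathcal Y$, and let $B$ be a closed, densely defined linear operator from $\operatorname{dom}B\subset\mathcal Y$ to $\mathcal X$. Assume that $\rho(AB)\neq\emptyset$ and $\rho(BA)\neq\emptyset$. Then $$\sigma(AB)\setminus\{0\}=\sigma(BA)\setminus\{0\}.$$ Moreover, for $\lambda\in\rho(AB)\setminus\{0\}$ and $\mu\in\rho(BA)$, $$(BA-\lambda)^{-1}=\lambda^{-1}\big[\overline{B(AB-\lambda)^{-1}A}-I\big]=\lambda^{-1}\big(\mu+(\lambda-\mu)B(AB-\lambda)^{-1}A\big)(BA-\mu)^{-1},$$ where the bar denotes the closure of the (densely defined, bounded) operator $B(AB-\lambda)^{-1}A$ defined on $\operatorname{dom}A$. Consequently, there exists a constant $C>0$ depending only on $A$ and $B$ such that for all $\lambda,\mu\in\rho(BA)$ with $\lambda\neq0$, $$\|(BA-\lambda)^{-1}\|\le\frac{C\,M_1(\lambda)M_2(\mu)}{|\lambda|}\Big(|\mu|+|\lambda-\mu|\,(2+|\lambda|)(2+|\mu|)\Big),$$ where $M_1(\lambda):=\max\{1,\|(AB-\lambda)^{-1}\|\}$ and $M_2(\mu):=\max\{1,\|(BA-\mu)^{-1}\|\}$.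
   Context: Products have natural domains: $\operatorname{dom}(AB)=\{y\in\operatorname{dom}B: By\in\operatorname{dom}A\}$, $\operatorname{dom}(BA)=\{x\in\operatorname{dom}A: Ax\in\operatorname{dom}B\}$. For a linear operator $S$ in a Banach space $\mathcal Z$, the resolvent set $\rho(S)$ is the set of $\lambda\in\mathbb C$ such that $S-\lambda:\operatorname{dom}S\to\mathcal Z$ is bijective with bounded inverse $(S-\lambda)^{-1}\in L(\mathcal Z)$; $\sigma(S)=\mathbb C\setminus\rho(S)$. (In particular, $\lambda\in\rho(BA)\setminus\{0\}$ implies $\lambda\in\rho(AB)$ by the first assertion, so $M_1(\lambda)$ is defined.) *)

From Stdlib Require Import Reals ClassicalEpsilon.
Open Scope R_scope.

Record C := mkC { Re : R; Im : R }.
Definition C0 : C := mkC 0 0.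
Definition C1 : C := mkC 1 0.
Definition Cadd (a b : C) : C := mkC (Re a + Re b) (Im a + Im b).
Definition Copp (a : C) : C := mkC (- Re a) (- Im a).
Definition Csub (a b : C) : C := Cadd a (Copp b).
Definition Cmul (a b : C) : C :=
  mkC (Re a * Re b - Im a * Im b) (Re a * Im b + Im a * Re b).
Definition Cinv (a : C) : C :=
  mkC (Re a / (Re a ^ 2 + Im a ^ 2)) (- Im a / (Re a ^ 2 + Im a ^ 2)).
Definition Cnorm (a : C) : R := sqrt (Re a ^ 2 + Im a ^ 2).

Record CBanach := {
  car :> Type;
  vzero : car;
  vadd : car -> car -> car;
  vopp : car -> car;
  vscal : C -> car -> car;
  vnorm : car -> R;
  vadd_assoc : forall x y z, vadd x (vadd y z) = vadd (vadd x y) z;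
  vadd_comm : forall x y, vadd x y = vadd y x;
  vadd_0 : forall x, vadd x vzero = x;
  vadd_opp : forall x, vadd x (vopp x) = vzero;
  vscal_1 : forall x, vscal C1 x = x;
  vscal_assoc : forall a b x, vscal a (vscal b x) = vscal (Cmul a b) x;
  vscal_distr_v : forall a x y, vscal a (vadd x y) = vadd (vscal a x) (vscal a y);
  vscal_distr_s : forall a b x, vscal (Cadd a b) x = vadd (vscal a x) (vscal b x);
  vnorm_eq0 : forall x, vnorm x = 0 -> x = vzero;
  vnorm_scal : forall a x, vnorm (vscal a x) = Cnorm a * vnorm x;
  vnorm_triangle : forall x y, vnorm (vadd x y) <= vnorm x + vnorm y;
  vcomplete : forall u : nat -> car,
    (forall eps, eps > 0 -> exists N, forall n m, (n >= N)%nat -> (m >= N)%nat ->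
        vnorm (vadd (u n) (vopp (u m))) < eps) ->
    exists l, forall eps, eps > 0 -> exists N, forall n, (n >= N)%nat ->
        vnorm (vadd (u n) (vopp l)) < eps
}.

Arguments vzero {_}.
Arguments vadd {_} _ _.
Arguments vopp {_} _.
Arguments vscal {_} _ _.
Arguments vnorm {_} _.

Definition vsub {X : CBanach} (x y : X) : X := vadd x (vopp y).

Definition seq_conv {X : CBanach} (u : nat -> X) (l : X) : Prop :=
  forall eps, eps > 0 -> exists N, forall n, (n >= N)%nat -> vnorm (vsub (u n) l) < eps.

(* A linear operator from dom T ⊂ X to Y: a domain predicate and a map,
   the map being meaningful only on the domain. *)
Record Op (X Y : CBanach) := mkOp { dom : X -> Prop; app : X -> Y }.
Arguments mkOp {X Y} _ _.
Arguments dom {X Y} _ _.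
Arguments app {X Y} _ _.

Definition linear_op {X Y : CBanach} (T : Op X Y) : Prop :=
  dom T vzero /\
  (forall x y, dom T x -> dom T y -> dom T (vadd x y)) /\
  (forall a x, dom T x -> dom T (vscal a x)) /\
  (forall x y, dom T x -> dom T y -> app T (vadd x y) = vadd (app T x) (app T y)) /\
  (forall a x, dom T x -> app T (vscal a x) = vscal a (app T x)).

Definition densely_defined {X Y : CBanach} (T : Op X Y) : Prop :=
  forall x eps, eps > 0 -> exists x', dom T x' /\ vnorm (vsub x x') < eps.

Definition closed_op {X Y : CBanach} (T : Op X Y) : Prop :=
  forall (u : nat -> X) x y, (forall n, dom T (u n)) ->
    seq_conv u x -> seq_conv (fun n => app T (u n)) y ->
    dom T x /\ app T x = y.

Definition op_comp {X Y Z : CBanach} (S : Op Y Z) (T : Op X Y) : Op X Z :=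
  mkOp (fun x => dom T x /\ dom S (app T x)) (fun x => app S (app T x)).

Definition in_graph_closure {X Y : CBanach} (T : Op X Y) (x : X) (y : Y) : Prop :=
  forall eps, eps > 0 -> exists x', dom T x' /\ vnorm (vsub x x') < eps /\
     vnorm (vsub y (app T x')) < eps.

Definition bounded_linear {X Y : CBanach} (f : X -> Y) : Prop :=
  (forall x y, f (vadd x y) = vadd (f x) (f y)) /\
  (forall a x, f (vscal a x) = vscal a (f x)) /\
  (exists M, forall x, vnorm (f x) <= M * vnorm x).

(* operator norm sup { ||f x|| : ||x|| <= 1 } (chosen classically; only used
   for bounded f, where the least upper bound exists) *)
Definition opnorm {X Y : CBanach} (f : X -> Y) : R :=
  epsilon (inhabits 0)
    (fun M => is_lub (fun r => exists x, vnorm x <= 1 /\ r = vnorm (f x)) M).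

Definition is_resolvent {Z : CBanach} (S : Op Z Z) (lam : C) (Rs : Z -> Z) : Prop :=
  bounded_linear Rs /\
  (forall z, dom S (Rs z) /\ vsub (app S (Rs z)) (vscal lam (Rs z)) = z) /\
  (forall x, dom S x -> Rs (vsub (app S x) (vscal lam x)) = x).

Definition in_rho {Z : CBanach} (S : Op Z Z) (lam : C) : Prop :=
  exists Rs, is_resolvent S lam Rs.

From Pilot Require Import Defs.
From Stdlib Require Import Reals Lra Lia Psatz Classical ClassicalEpsilon.
Open Scope R_scope.

(* For lam <> 0 and any mu in rho(BA), the operator
     lam^-1 (mu (BA - mu)^-1 + (lam - mu) B (AB - lam)^-1 A (BA - mu)^-1)
   is a right inverse of BA - lam, and BA - lam is injective because an eigenvector v
   of BA would make A v an eigenvector of AB; so it is the resolvent of BA at lam.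
   This needs B (AB - lam)^-1 and A (BA - mu)^-1 to be bounded: they are everywhere
   defined and closed (B, A closed, the resolvents bounded), hence bounded by the closed
   graph theorem, itself a consequence of Baire's theorem.  The resolvent identity
   R(lam) = R(l0) (I + (lam - l0) R(lam)) bounds their norms affinely in the norms of
   the resolvents, which gives the estimate.  Exchanging A and B gives the reverse
   inclusion of resolvent sets.  On the dense set dom A, B (AB - lam)^-1 A equals the
   bounded map lam (BA - lam)^-1 + I, which is therefore its closure. *)

Arguments vadd_assoc {_}. Arguments vadd_comm {_}. Arguments vadd_0 {_}.
Arguments vadd_opp {_}. Arguments vscal_1 {_}. Arguments vscal_assoc {_}.
Arguments vscal_distr_v {_}. Arguments vscal_distr_s {_}. Arguments vnorm_eq0 {_}.
Arguments vnorm_scal {_}. Arguments vnorm_triangle {_}. Arguments vcomplete {_}.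

(** * Complex scalars *)

Lemma C_ext (a b : Defs.C) : Re a = Re b -> Im a = Im b -> a = b.
Proof. destruct a, b; simpl; intros; subst; reflexivity. Qed.

Lemma Cnorm_ge0 (a : Defs.C) : 0 <= Cnorm a.
Proof. apply sqrt_pos. Qed.

Lemma Cnorm_real (t : R) : Cnorm (mkC t 0) = Rabs t.
Proof. unfold Cnorm; simpl. rewrite <- sqrt_Rsqr_abs. f_equal. unfold Rsqr; ring. Qed.

Lemma Cnorm_opp (a : Defs.C) : Cnorm (Copp a) = Cnorm a.
Proof. unfold Cnorm; simpl. f_equal. ring. Qed.

Lemma Cnorm_triangle (a b : Defs.C) : Cnorm (Cadd a b) <= Cnorm a + Cnorm b.
Proof.
  destruct a as [a1 a2], b as [b1 b2]. unfold Cnorm, Cadd. cbn [Re Im].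
  set (A := a1^2 + a2^2). set (B := b1^2 + b2^2).
  assert (HA : 0 <= A) by (unfold A; nra). assert (HB : 0 <= B) by (unfold B; nra).
  pose proof (sqrt_sqrt A HA). pose proof (sqrt_sqrt B HB).
  pose proof (sqrt_pos A). pose proof (sqrt_pos B).
  set (sA := sqrt A) in *. set (sB := sqrt B) in *.
  (* Cauchy-Schwarz, from Lagrange's identity *)
  assert (Hcs : a1 * b1 + a2 * b2 <= sA * sB).
  { assert ((a1 * b1 + a2 * b2)^2 <= (sA * sB)^2).
    { replace ((sA * sB)^2) with ((sA * sA) * (sB * sB)) by ring. rewrite H, H0.
      unfold A, B. pose proof (pow2_ge_0 (a1 * b2 - a2 * b1)). nra. }
    assert (0 <= sA * sB) by nra. nra. }
  rewrite <- (sqrt_Rsqr (sA + sB)) by lra. apply sqrt_le_1_alt. unfold Rsqr, A, B in *. nra.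
Qed.

Lemma Cnorm_sub_le (a b : Defs.C) : Cnorm (Csub a b) <= Cnorm a + Cnorm b.
Proof. unfold Csub. rewrite <- (Cnorm_opp b). apply Cnorm_triangle. Qed.

Lemma Cnorm2_gt0 (a : Defs.C) : a <> C0 -> 0 < Re a ^ 2 + Im a ^ 2.
Proof.
  intro Ha. destruct a as [a1 a2]; cbn [Re Im].
  destruct (Req_dec a1 0) as [->|H1]; [destruct (Req_dec a2 0) as [->|H2]|].
  - contradiction.
  - pose proof (Rsqr_pos_lt a2 H2). unfold Rsqr in *. nra.
  - pose proof (Rsqr_pos_lt a1 H1). pose proof (pow2_ge_0 a2). unfold Rsqr in *. nra.
Qed.

Lemma Cnorm_gt0 (a : Defs.C) : a <> C0 -> 0 < Cnorm a.
Proof. intro Ha. apply sqrt_lt_R0, Cnorm2_gt0, Ha. Qed.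

Lemma CmulV (a : Defs.C) : a <> C0 -> Cmul a (Cinv a) = Defs.C1.
Proof.
  intro Ha. pose proof (Cnorm2_gt0 a Ha). destruct a as [a1 a2]; cbn [Re Im] in *.
  apply C_ext; unfold Cmul, Cinv, Defs.C1; cbn [Re Im]; field; lra.
Qed.

Lemma CmulVl (a : Defs.C) : a <> C0 -> Cmul (Cinv a) a = Defs.C1.
Proof.
  intro Ha. pose proof (Cnorm2_gt0 a Ha). destruct a as [a1 a2]; cbn [Re Im] in *.
  apply C_ext; unfold Cmul, Cinv, Defs.C1; cbn [Re Im]; field; lra.
Qed.

(** * Algebra in a complex Banach space *)

Section VectorAlgebra.
Variable X : CBanach.
Implicit Types x y z : X.

Lemma vadd_0l x : vadd vzero x = x.
Proof. rewrite vadd_comm; apply vadd_0. Qed.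

Lemma vadd_oppl x : vadd (vopp x) x = vzero.
Proof. rewrite vadd_comm; apply vadd_opp. Qed.

Lemma vadd_cancell x y z : vadd x y = vadd x z -> y = z.
Proof.
  intro H. rewrite <- (vadd_0l y), <- (vadd_0l z), <- (vadd_oppl x), <- !vadd_assoc, H.
  reflexivity.
Qed.

Lemma vopp_unique x y : vadd x y = vzero -> y = vopp x.
Proof. intro H. apply (vadd_cancell x). rewrite H, vadd_opp. reflexivity. Qed.

Lemma vopp_opp x : vopp (vopp x) = x.
Proof. symmetry. apply vopp_unique, vadd_oppl. Qed.

Lemma vadd_ACA (a b c d : X) : vadd (vadd a b) (vadd c d) = vadd (vadd a c) (vadd b d).
Proof. rewrite !vadd_assoc. f_equal. rewrite <- !vadd_assoc. f_equal. apply vadd_comm. Qed.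

Lemma vopp_add x y : vopp (vadd x y) = vadd (vopp x) (vopp y).
Proof.
  symmetry. apply vopp_unique. rewrite vadd_ACA, !vadd_opp. apply vadd_0.
Qed.

Lemma vsub_self x : vsub x x = vzero.
Proof. apply vadd_opp. Qed.

Lemma vsub_0r x : vsub x vzero = x.
Proof. unfold vsub. rewrite <- (vopp_unique vzero vzero (vadd_0 _)). apply vadd_0. Qed.

Lemma vsub_addKr x y : vsub (vadd x y) y = x.
Proof. unfold vsub. rewrite <- vadd_assoc, vadd_opp, vadd_0. reflexivity. Qed.

Lemma vsub_add_split (a b c d : X) : vsub (vadd a b) (vadd c d) = vadd (vsub a c) (vsub b d).
Proof. unfold vsub. rewrite vopp_add. apply vadd_ACA. Qed.

Lemma vsub_sub_split (a b c d : X) : vsub (vsub a b) (vsub c d) = vsub (vsub a c) (vsub b d).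
Proof. unfold vsub. rewrite !vopp_add, !vopp_opp. apply vadd_ACA. Qed.

Lemma vsub_telescope (a b c : X) : vadd (vsub a b) (vsub b c) = vsub a c.
Proof.
  unfold vsub. rewrite <- vadd_assoc, (vadd_assoc (vopp b)), vadd_oppl, vadd_0l. reflexivity.
Qed.

Lemma vopp_sub x y : vopp (vsub x y) = vsub y x.
Proof. unfold vsub. rewrite vopp_add, vopp_opp. apply vadd_comm. Qed.

Lemma vsub_subKr x y : vsub x (vsub x y) = y.
Proof. unfold vsub. rewrite vopp_add, vopp_opp, vadd_assoc, vadd_opp, vadd_0l. reflexivity. Qed.

Lemma vsub_move (a b c : X) : vsub a b = c -> a = vadd c b.
Proof. intros <-. unfold vsub. rewrite <- vadd_assoc, vadd_oppl, vadd_0. reflexivity. Qed.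

Lemma vsub_eq0 (a b : X) : vsub a b = vzero -> a = b.
Proof. intro H. apply vsub_move in H. rewrite H. apply vadd_0l. Qed.

Lemma vscal_0 x : vscal C0 x = vzero.
Proof.
  apply (vadd_cancell (vscal C0 x)). rewrite <- vscal_distr_s, vadd_0.
  f_equal. apply C_ext; simpl; ring.
Qed.

Lemma vscal_v0 (a : Defs.C) : vscal a (@vzero X) = vzero.
Proof. apply (vadd_cancell (vscal a vzero)). rewrite <- vscal_distr_v, !vadd_0. reflexivity. Qed.

Lemma vopp_scal x : vopp x = vscal (Copp Defs.C1) x.
Proof.
  symmetry. apply vopp_unique. rewrite <- (vscal_1 x) at 1. rewrite <- vscal_distr_s.
  rewrite <- (vscal_0 x). f_equal. apply C_ext; simpl; ring.
Qed.

Lemma vscal_sub (a : Defs.C) x y : vscal a (vsub x y) = vsub (vscal a x) (vscal a y).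
Proof. unfold vsub. rewrite vscal_distr_v, !vopp_scal, !vscal_assoc. do 2 f_equal. apply C_ext; simpl; ring. Qed.

Lemma vscal_subl (a b : Defs.C) x : vscal (Csub a b) x = vsub (vscal a x) (vscal b x).
Proof.
  unfold Csub, vsub. rewrite vscal_distr_s, vopp_scal, vscal_assoc. do 2 f_equal.
  apply C_ext; simpl; ring.
Qed.

Lemma vscalC (a b : Defs.C) x : vscal a (vscal b x) = vscal b (vscal a x).
Proof. rewrite !vscal_assoc. f_equal. apply C_ext; simpl; ring. Qed.

Lemma vscalK (a : Defs.C) x : a <> C0 -> vscal (Cinv a) (vscal a x) = x.
Proof. intro Ha. rewrite vscal_assoc, CmulVl, vscal_1 by exact Ha. reflexivity. Qed.

Lemma vnorm_0 : vnorm (@vzero X) = 0.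
Proof.
  rewrite <- (vscal_0 vzero), vnorm_scal. unfold C0. rewrite Cnorm_real, Rabs_R0. ring.
Qed.

Lemma vnorm_opp x : vnorm (vopp x) = vnorm x.
Proof.
  rewrite vopp_scal, vnorm_scal, Cnorm_opp. unfold Defs.C1. rewrite Cnorm_real, Rabs_R1. ring.
Qed.

Lemma vnorm_ge0 x : 0 <= vnorm x.
Proof. pose proof (vnorm_triangle x (vopp x)). rewrite vadd_opp, vnorm_0, vnorm_opp in H. lra. Qed.

Lemma vnorm_subC x y : vnorm (vsub x y) = vnorm (vsub y x).
Proof. rewrite <- vopp_sub. apply vnorm_opp. Qed.

Lemma vnorm_sub_triangle (a b c : X) :
  vnorm (vsub a c) <= vnorm (vsub a b) + vnorm (vsub b c).
Proof. rewrite <- (vsub_telescope a b c). apply vnorm_triangle. Qed.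

Lemma vnorm_sub_le x y : vnorm (vsub x y) <= vnorm x + vnorm y.
Proof. unfold vsub. rewrite <- (vnorm_opp y). apply vnorm_triangle. Qed.

Lemma vnorm_real_scal (t : R) x : vnorm (vscal (mkC t 0) x) = Rabs t * vnorm x.
Proof. rewrite vnorm_scal, Cnorm_real. reflexivity. Qed.

Lemma vnorm_le_eps x : (forall eps, eps > 0 -> vnorm x <= eps) -> x = vzero.
Proof.
  intro H. apply vnorm_eq0. pose proof (vnorm_ge0 x).
  destruct (Rle_lt_or_eq_dec _ _ H0) as [Hl|He]; [|auto].
  specialize (H (vnorm x / 2) ltac:(lra)). lra.
Qed.

End VectorAlgebra.

(** * Linear operators and bounded linear maps *)

Section LinearOp.
Variables X Y : CBanach.
Variable T : Op X Y.
Hypothesis HT : linear_op T.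

Lemma linear_dom0 : dom T vzero. Proof. apply HT. Qed.
Lemma linear_domD x y : dom T x -> dom T y -> dom T (vadd x y). Proof. apply HT. Qed.
Lemma linear_domZ a x : dom T x -> dom T (vscal a x). Proof. apply HT. Qed.
Lemma linear_appD x y : dom T x -> dom T y -> app T (vadd x y) = vadd (app T x) (app T y).
Proof. apply HT. Qed.
Lemma linear_appZ a x : dom T x -> app T (vscal a x) = vscal a (app T x).
Proof. apply HT. Qed.

Lemma linear_domB x y : dom T x -> dom T y -> dom T (vsub x y).
Proof. intros. apply linear_domD; auto. rewrite vopp_scal. apply linear_domZ; auto. Qed.

Lemma linear_app0 : app T vzero = vzero.
Proof. rewrite <- (vscal_0 X vzero), linear_appZ by apply linear_dom0. apply vscal_0. Qed.

Lemma linear_appB x y : dom T x -> dom T y -> app T (vsub x y) = vsub (app T x) (app T y).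
Proof.
  intros. unfold vsub. rewrite linear_appD, !vopp_scal, linear_appZ; auto.
  rewrite vopp_scal. apply linear_domZ; auto.
Qed.

End LinearOp.

Lemma linear_op_comp {X Y Z : CBanach} (S : Op Y Z) (T : Op X Y) :
  linear_op S -> linear_op T -> linear_op (op_comp S T).
Proof.
  intros HS HT. unfold op_comp, linear_op; simpl. split; [|split; [|split; [|split]]].
  - rewrite linear_app0 by auto. split; apply linear_dom0; auto.
  - intros x y [? ?] [? ?]. rewrite linear_appD by auto. split; apply linear_domD; auto.
  - intros a x [? ?]. rewrite linear_appZ by auto. split; apply linear_domZ; auto.
  - intros x y [? ?] [? ?]. rewrite !linear_appD by auto. reflexivity.
  - intros a x [? ?]. rewrite !linear_appZ by auto. reflexivity.
Qed.

Section BoundedLinear.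
Variables X Y : CBanach.
Variable f : X -> Y.
Hypothesis Hf : bounded_linear f.

Lemma blinD x y : f (vadd x y) = vadd (f x) (f y). Proof. apply Hf. Qed.
Lemma blinZ a x : f (vscal a x) = vscal a (f x). Proof. apply Hf. Qed.

Lemma blin0 : f vzero = vzero.
Proof. rewrite <- (vscal_0 X vzero), blinZ. apply vscal_0. Qed.

Lemma blinB x y : f (vsub x y) = vsub (f x) (f y).
Proof. unfold vsub. rewrite blinD, !vopp_scal, blinZ. reflexivity. Qed.

Lemma blin_bound : exists M, 0 <= M /\ forall x, vnorm (f x) <= M * vnorm x.
Proof.
  destruct Hf as [_ [_ [M HM]]]. exists (Rabs M). split; [apply Rabs_pos|].
  intro x. eapply Rle_trans; [apply HM|].
  apply Rmult_le_compat_r; [apply vnorm_ge0|apply RRle_abs].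
Qed.

Lemma blin_seq_conv u l : seq_conv u l -> seq_conv (fun n => f (u n)) (f l).
Proof.
  intros Hu eps Heps. destruct blin_bound as [M [HM0 HM]].
  destruct (Hu (eps / (M + 1))) as [N HN]; [apply Rdiv_lt_0_compat; lra|].
  exists N. intros n Hn. rewrite <- blinB. eapply Rle_lt_trans; [apply HM|].
  specialize (HN n Hn). pose proof (vnorm_ge0 _ (vsub (u n) l)).
  apply Rlt_le_trans with ((M + 1) * (eps / (M + 1))); [nra|].
  right. field. lra.
Qed.

Lemma opnorm_lub :
  is_lub (fun r => exists x, vnorm x <= 1 /\ r = vnorm (f x)) (opnorm f).
Proof.
  unfold opnorm. apply epsilon_spec.
  destruct blin_bound as [M [HM0 HM]].
  destruct (completeness (fun r => exists x, vnorm x <= 1 /\ r = vnorm (f x))) as [l Hl].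
  - exists M. intros r [x [Hx ->]]. eapply Rle_trans; [apply HM|]. nra.
  - exists (vnorm (f vzero)), vzero. rewrite vnorm_0. split; [lra|reflexivity].
  - exists l. exact Hl.
Qed.

Lemma opnorm_ge0 : 0 <= opnorm f.
Proof.
  destruct opnorm_lub as [Hub _]. eapply Rle_trans; [apply (vnorm_ge0 _ (f vzero))|].
  apply Hub. exists vzero. rewrite vnorm_0. split; [lra|reflexivity].
Qed.

Lemma opnorm_bound x : vnorm (f x) <= opnorm f * vnorm x.
Proof.
  destruct (Req_dec (vnorm x) 0) as [H0|H0].
  { apply vnorm_eq0 in H0. subst. rewrite blin0, !vnorm_0, Rmult_0_r. lra. }
  pose proof (vnorm_ge0 _ x). set (s := / vnorm x).
  assert (Hs : 0 < s) by (apply Rinv_0_lt_compat; lra).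
  destruct opnorm_lub as [Hub _].
  assert (Hunit : vnorm (f (vscal (mkC s 0) x)) <= opnorm f).
  { apply Hub. eexists. split; [|reflexivity]. rewrite vnorm_real_scal, Rabs_right by (left; exact Hs).
    right. unfold s. field. lra. }
  rewrite blinZ, vnorm_real_scal, Rabs_right in Hunit by (left; exact Hs).
  apply Rmult_le_compat_r with (r := vnorm x) in Hunit; [|lra].
  replace (s * vnorm (f x) * vnorm x) with (vnorm (f x)) in Hunit by (unfold s; field; lra).
  exact Hunit.
Qed.

Lemma opnorm_le c : 0 <= c -> (forall x, vnorm (f x) <= c * vnorm x) -> opnorm f <= c.
Proof.
  intros Hc H. destruct opnorm_lub as [_ Hleast]. apply Hleast.
  intros r [x [Hx ->]]. eapply Rle_trans; [apply H|]. nra.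
Qed.

End BoundedLinear.

(** * Completeness, Baire category and the closed graph theorem *)

Lemma le_of_lt_eps (a b : R) : (forall eps, eps > 0 -> a < b + eps) -> a <= b.
Proof. intro H. apply Rnot_lt_le. intro Hl. specialize (H (a - b) ltac:(lra)). lra. Qed.

Lemma half_pow_small eps : eps > 0 -> exists N, forall n, (n >= N)%nat -> (1/2)^n < eps.
Proof.
  intro He. destruct (pow_lt_1_zero (1/2) ltac:(rewrite Rabs_right; lra) eps He) as [N HN].
  exists N. intros n Hn. specialize (HN n Hn). rewrite Rabs_right in HN; auto.
  left. apply pow_lt. lra.
Qed.

Section Completeness.
Variable X : CBanach.

Lemma seq_conv_norm_le (u : nat -> X) l v b :
  seq_conv u l -> (exists N, forall n, (n >= N)%nat -> vnorm (vsub (u n) v) <= b) ->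
  vnorm (vsub l v) <= b.
Proof.
  intros Hu [N HN]. apply le_of_lt_eps. intros eps He. destruct (Hu eps He) as [N' HN'].
  specialize (HN (N + N')%nat ltac:(lia)). specialize (HN' (N + N')%nat ltac:(lia)).
  rewrite vnorm_subC in HN'. pose proof (vnorm_sub_triangle _ l (u (N + N')%nat) v). lra.
Qed.

Lemma seq_conv_geometric (u : nat -> X) l a :
  (forall k, vnorm (vsub (u k) l) <= a * (1/2)^k) -> seq_conv u l.
Proof.
  intros Hu eps He. pose proof (Rle_trans _ _ _ (vnorm_ge0 _ _) (Hu O)) as Ha.
  simpl in Ha. rewrite Rmult_1_r in Ha.
  destruct (half_pow_small (eps / (a + 1))) as [N HN]; [apply Rdiv_lt_0_compat; lra|].
  exists N. intros n Hn. specialize (HN n Hn). eapply Rle_lt_trans; [apply Hu|].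
  apply Rle_lt_trans with ((a + 1) * (1/2)^n); [pose proof (pow_lt (1/2) n); nra|].
  apply Rmult_lt_compat_l with (r := a + 1) in HN; [|lra].
  replace ((a + 1) * (eps / (a + 1))) with eps in HN by (field; lra). exact HN.
Qed.

Lemma geometric_limit (u : nat -> X) a :
  (forall k, vnorm (vsub (u (S k)) (u k)) <= a * (1/2)^k) ->
  exists l, seq_conv u l /\ forall k, vnorm (vsub l (u k)) <= 2 * a * (1/2)^k.
Proof.
  intro Hu. pose proof (Rle_trans _ _ _ (vnorm_ge0 _ _) (Hu O)) as Ha.
  simpl in Ha. rewrite Rmult_1_r in Ha.
  assert (Htail : forall k n, (n >= k)%nat -> vnorm (vsub (u n) (u k)) <= 2 * a * (1/2)^k).
  { assert (Hexact : forall k m,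
      vnorm (vsub (u (k + m)%nat) (u k)) <= 2 * a * ((1/2)^k - (1/2)^(k + m))).
    { intros k m. induction m.
      - rewrite Nat.add_0_r, vsub_self, vnorm_0. lra.
      - rewrite Nat.add_succ_r.
        eapply Rle_trans; [apply vnorm_sub_triangle with (b := u (k + m)%nat)|].
        pose proof (Hu (k + m)%nat). simpl pow. lra. }
    intros k n Hn. replace n with (k + (n - k))%nat by lia.
    pose proof (Hexact k (n - k)%nat). pose proof (pow_lt (1/2) (k + (n - k))). nra. }
  assert (Hcauchy : forall eps, eps > 0 -> exists N, forall n m, (n >= N)%nat -> (m >= N)%nat ->
            vnorm (vadd (u n) (vopp (u m))) < eps).
  { intros eps He. destruct (half_pow_small (eps / (4 * a + 1))) as [N HN].
    { apply Rdiv_lt_0_compat; lra. }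
    assert (Hsmall : 4 * a * (1/2)^N < eps).
    { specialize (HN N (le_n N)). apply Rmult_lt_compat_l with (r := 4 * a + 1) in HN; [|lra].
      replace ((4 * a + 1) * (eps / (4 * a + 1))) with eps in HN by (field; lra).
      pose proof (pow_lt (1/2) N). nra. }
    exists N. intros n m Hn Hm. fold (vsub (u n) (u m)).
    pose proof (vnorm_sub_triangle _ (u n) (u N) (u m)).
    rewrite (vnorm_subC _ (u N) (u m)) in H.
    pose proof (Htail N n Hn). pose proof (Htail N m Hm). lra. }
  destruct (vcomplete u Hcauchy) as [l Hl].
  exists l. split; [exact Hl|]. intro k. apply (seq_conv_norm_le u); [exact Hl|].
  exists k. exact (Htail k).
Qed.

Lemma nested_balls_limit (c : nat -> X) (r : nat -> R) :
  (forall k, 0 < r k) -> (forall k, r (S k) <= r k / 2) ->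
  (forall k, vnorm (vsub (c (S k)) (c k)) + r (S k) <= r k) ->
  exists l, forall k, vnorm (vsub l (c k)) <= r k.
Proof.
  intros Hpos Hhalf Hnest.
  assert (Hgeom : forall k, r k <= r O * (1/2)^k).
  { induction k; simpl; [lra|]. pose proof (Hhalf k). lra. }
  destruct (geometric_limit c (r O)) as [l [Hl _]].
  { intro k. pose proof (Hnest k). pose proof (Hpos (S k)). pose proof (Hgeom k). lra. }
  assert (Hinside : forall k m, vnorm (vsub (c (k + m)%nat) (c k)) + r (k + m)%nat <= r k).
  { intros k m. induction m.
    - rewrite Nat.add_0_r, vsub_self, vnorm_0. lra.
    - rewrite Nat.add_succ_r. pose proof (Hnest (k + m)%nat).
      pose proof (vnorm_sub_triangle _ (c (S (k + m))) (c (k + m)%nat) (c k)). lra. }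
  exists l. intro k. apply (seq_conv_norm_le c); [exact Hl|].
  exists k. intros n Hn. replace n with (k + (n - k))%nat by lia.
  pose proof (Hinside k (n - k)%nat). pose proof (Hpos (k + (n - k))%nat). lra.
Qed.

Lemma baire_dense_in_ball (F : nat -> X -> Prop) :
  (forall x, exists n, F n x) ->
  exists n x0 r, 0 < r /\ forall x, vnorm (vsub x x0) < r ->
    forall d, 0 < d -> exists x', F n x' /\ vnorm (vsub x x') < d.
Proof.
  intro Hcover. apply NNPP. intro Hnowhere.
  assert (Hshrink : forall nb : nat * (X * R), exists b : X * R,
    0 < snd (snd nb) ->
    0 < snd b /\ snd b <= snd (snd nb) / 2 /\
    vnorm (vsub (fst b) (fst (snd nb))) + snd b <= snd (snd nb) /\
    forall x', F (fst nb) x' -> 2 * snd b <= vnorm (vsub (fst b) x')).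
  { intros [n [x0 r]]; cbn. destruct (Rlt_le_dec 0 r) as [Hr|Hr]; [|exists (x0, r); lra].
    apply NNPP. intro Hno. apply Hnowhere. exists n, x0, r. split; [exact Hr|].
    intros x Hx d Hd. apply NNPP. intro Hfar. apply Hno.
    exists (x, Rmin d (r - vnorm (vsub x x0)) / 2); cbn.
    pose proof (Rmin_l d (r - vnorm (vsub x x0))). pose proof (Rmin_r d (r - vnorm (vsub x x0))).
    assert (0 < Rmin d (r - vnorm (vsub x x0))) by (apply Rmin_glb_lt; lra).
    pose proof (vnorm_ge0 _ (vsub x x0)).
    intros _. repeat split; try lra.
    intros x' Hx'. apply Rnot_lt_le. intro Hlt. apply Hfar. exists x'. split; [exact Hx'|lra]. }
  destruct (choice _ Hshrink) as [next Hnext].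
  set (ball := nat_rect (fun _ => (X * R)%type) (vzero, 1) (fun k b => next (k, b))).
  assert (Hpos : forall k, 0 < snd (ball k)).
  { induction k; [cbn; lra|]. apply (Hnext (k, ball k) IHk). }
  destruct (nested_balls_limit (fun k => fst (ball k)) (fun k => snd (ball k))) as [l Hl].
  - exact Hpos.
  - intro k. apply (Hnext (k, ball k) (Hpos k)).
  - intro k. apply (Hnext (k, ball k) (Hpos k)).
  - destruct (Hcover l) as [j Hj].
    destruct (Hnext (j, ball j) (Hpos j)) as [_ [_ [_ Hfar]]].
    specialize (Hfar l Hj). specialize (Hl (S j)). specialize (Hpos (S j)). cbn in *.
    rewrite vnorm_subC in Hl. lra.
Qed.

End Completeness.

Section ClosedGraph.
Variables Y X : CBanach.
Variable T : Y -> X.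
Hypothesis TD : forall y1 y2, T (vadd y1 y2) = vadd (T y1) (T y2).
Hypothesis TZ : forall a y, T (vscal a y) = vscal a (T y).
Hypothesis T_closed :
  forall u y x, seq_conv u y -> seq_conv (fun n => T (u n)) x -> T y = x.

Let T0 : T vzero = vzero.
Proof. rewrite <- (vscal_0 Y vzero), TZ. apply vscal_0. Qed.

Let TB a b : T (vsub a b) = vsub (T a) (T b).
Proof. unfold vsub. rewrite TD, !vopp_scal, TZ. reflexivity. Qed.

Lemma closed_graph_approx_ball : exists c r, 0 <= c /\ 0 < r /\
  forall y, vnorm y < r -> forall d, 0 < d ->
    exists y', vnorm (T y') <= c /\ vnorm (vsub y y') < d.
Proof.
  destruct (baire_dense_in_ball Y (fun n y => vnorm (T y) <= INR n)) as [n [y0 [r [Hr Hdense]]]].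
  { intro y. destruct (INR_unbounded (vnorm (T y))) as [n Hn]. exists n. lra. }
  exists (2 * INR n), r. pose proof (pos_INR n). split; [lra|split; [exact Hr|]].
  (* approximate y0 + y and y0 inside the ball, and subtract *)
  intros y Hy d Hd.
  destruct (Hdense (vadd y0 y) ltac:(rewrite vadd_comm, vsub_addKr; exact Hy) (d / 2))
    as [a [Ha Hya]]; [lra|].
  destruct (Hdense y0 ltac:(rewrite vsub_self, vnorm_0; lra) (d / 2)) as [b [Hb Hyb]]; [lra|].
  exists (vsub a b). rewrite TB. split.
  - pose proof (vnorm_sub_le _ (T a) (T b)). lra.
  - replace (vsub y (vsub a b)) with (vsub (vsub (vadd y0 y) a) (vsub y0 b)).
    + pose proof (vnorm_sub_le _ (vsub (vadd y0 y) a) (vsub y0 b)). lra.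
    + rewrite vsub_sub_split, vadd_comm, vsub_addKr. reflexivity.
Qed.

Lemma closed_graph_approx : exists K, 0 <= K /\
  forall y d, 0 < d -> exists y', vnorm (T y') <= K * vnorm y /\ vnorm (vsub y y') < d.
Proof.
  destruct closed_graph_approx_ball as [c [r [Hc [Hr Happrox]]]].
  exists (2 * c / r). split; [apply Rmult_le_pos; [lra|left; apply Rinv_0_lt_compat; lra]|].
  intros y d Hd. destruct (Req_dec (vnorm y) 0) as [H0|H0].
  { apply vnorm_eq0 in H0. subst. exists vzero. rewrite T0, vsub_self, !vnorm_0. lra. }
  pose proof (vnorm_ge0 _ y). set (s := r / (2 * vnorm y)).
  assert (Hs : 0 < s) by (unfold s; apply Rdiv_lt_0_compat; lra).
  destruct (Happrox (vscal (mkC s 0) y)) with (d := d * s) as [y' [HTy' Hyy']].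
  { rewrite vnorm_real_scal, Rabs_right by lra. unfold s. field_simplify; lra. }
  { nra. }
  assert (Hsinv : 0 < / s) by (apply Rinv_0_lt_compat; lra).
  exists (vscal (mkC (/ s) 0) y'). split.
  - rewrite TZ, vnorm_real_scal, Rabs_right by lra.
    apply Rle_trans with (/ s * c); [apply Rmult_le_compat_l; lra|].
    right. unfold s. field. lra.
  - replace (vsub y (vscal (mkC (/ s) 0) y'))
      with (vscal (mkC (/ s) 0) (vsub (vscal (mkC s 0) y) y')).
    + rewrite vnorm_real_scal, Rabs_right by lra.
      apply Rlt_le_trans with (/ s * (d * s)); [apply Rmult_lt_compat_l; lra|].
      right. field. lra.
    + rewrite vscal_sub, vscal_assoc.
      replace (Cmul (mkC (/ s) 0) (mkC s 0)) with Defs.C1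
        by (apply C_ext; unfold Cmul, Defs.C1; cbn [Re Im]; field; lra).
      rewrite vscal_1. reflexivity.
Qed.

Theorem closed_graph_bounded : exists M, 0 <= M /\ forall y, vnorm (T y) <= M * vnorm y.
Proof.
  destruct closed_graph_approx as [K [HK Happrox]].
  exists (2 * K). split; [lra|]. intro y.
  destruct (Req_dec (vnorm y) 0) as [H0|H0].
  { apply vnorm_eq0 in H0. subst. rewrite T0, !vnorm_0, Rmult_0_r. lra. }
  pose proof (vnorm_ge0 _ y).
  assert (Hpow : forall k, 0 < (1/2)^k) by (intro; apply pow_lt; lra).
  destruct (choice (fun (p : Y * R) y' => 0 < snd p ->
              vnorm (T y') <= K * vnorm (fst p) /\ vnorm (vsub (fst p) y') < snd p))
    as [g Hg].
  { intros [z d]. destruct (Rlt_le_dec 0 d) as [Hd|Hd].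
    - destruct (Happrox z d Hd) as [y' Hy']. exists y'. auto.
    - exists z. cbn. lra. }
  (* successive approximation: each step approximates the remaining error *)
  set (tol := fun k => vnorm y * (1/2)^(S k)).
  set (Sq := nat_rect (fun _ => Y) vzero (fun k s => vadd s (g (vsub y s, tol k)))).
  assert (Htol : forall k, 0 < tol k) by (intro k; unfold tol; pose proof (Hpow (S k)); nra).
  assert (Herr : forall k, vnorm (vsub (Sq k) y) <= vnorm y * (1/2)^k).
  { induction k; cbn [Sq nat_rect].
    - rewrite vnorm_subC, vsub_0r. simpl. lra.
    - fold (Sq k). rewrite vnorm_subC.
      replace (vsub y (vadd (Sq k) (g (vsub y (Sq k), tol k))))
        with (vsub (vsub y (Sq k)) (g (vsub y (Sq k), tol k)))
        by (unfold vsub; rewrite vopp_add, vadd_assoc; reflexivity).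
      destruct (Hg (vsub y (Sq k), tol k) (Htol k)) as [_ Hclose]. cbn in Hclose.
      assert (Etol : tol k = vnorm y * (1/2)^(S k)) by reflexivity. lra. }
  destruct (geometric_limit X (fun k => T (Sq k)) (K * vnorm y)) as [x [HTSq Hx]].
  { intro k. cbn [Sq nat_rect]. fold (Sq k). rewrite TD, vadd_comm, vsub_addKr.
    destruct (Hg (vsub y (Sq k), tol k) (Htol k)) as [Hsmall _]. cbn in Hsmall.
    pose proof (Herr k) as Herrk. rewrite vnorm_subC in Herrk.
    eapply Rle_trans; [exact Hsmall|]. rewrite Rmult_assoc.
    apply Rmult_le_compat_l; [exact HK|exact Herrk]. }
  rewrite (T_closed Sq y x (seq_conv_geometric Y Sq y (vnorm y) Herr) HTSq).
  specialize (Hx O). cbn [Sq nat_rect] in Hx. rewrite T0, vsub_0r in Hx. simpl in Hx. lra.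
Qed.

End ClosedGraph.

(** * Resolvents *)

Section Resolvent.
Variable Z : CBanach.
Variable T : Op Z Z.

Lemma is_resolvent_unique lam R R' :
  is_resolvent T lam R -> is_resolvent T lam R' -> forall z, R z = R' z.
Proof.
  intros [_ [_ Hleft]] [_ [Hright' _]] z. destruct (Hright' z) as [Hd He].
  rewrite <- He at 1. apply Hleft, Hd.
Qed.

Lemma resolvent_identity lam l0 R R0 :
  is_resolvent T lam R -> is_resolvent T l0 R0 ->
  forall z, R z = R0 (vadd z (vscal (Csub lam l0) (R z))).
Proof.
  intros [_ [Hright _]] [_ [_ Hleft0]] z. destruct (Hright z) as [Hd He].
  set (v := R z) in *. rewrite <- (Hleft0 v Hd) at 1. f_equal.
  rewrite vscal_subl, <- He at 1. symmetry. apply vsub_telescope.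
Qed.

Lemma resolvent_comp_bound (W : CBanach) (E : Z -> W) lam l0 R R0 K :
  is_resolvent T lam R -> is_resolvent T l0 R0 -> 0 <= K ->
  (forall z, vnorm (E (R0 z)) <= K * vnorm z) ->
  forall z, vnorm (E (R z)) <= K * (1 + Cnorm (Csub lam l0) * opnorm R) * vnorm z.
Proof.
  intros HR HR0 HK HE z. rewrite (resolvent_identity _ _ _ _ HR HR0 z).
  eapply Rle_trans; [apply HE|]. rewrite Rmult_assoc. apply Rmult_le_compat_l; [exact HK|].
  eapply Rle_trans; [apply vnorm_triangle|]. rewrite vnorm_scal.
  pose proof (opnorm_bound _ _ R (proj1 HR) z). pose proof (Cnorm_ge0 (Csub lam l0)).
  pose proof (vnorm_ge0 _ z).
  assert (Cnorm (Csub lam l0) * vnorm (R z) <= Cnorm (Csub lam l0) * (opnorm R * vnorm z))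
    by (apply Rmult_le_compat_l; auto).
  nra.
Qed.

End Resolvent.

Lemma closed_op_comp_bounded (Z W V : CBanach) (E : Op W V) (F : Z -> W) :
  linear_op E -> closed_op E -> bounded_linear F -> (forall z, dom E (F z)) ->
  exists M, 0 <= M /\ forall z, vnorm (app E (F z)) <= M * vnorm z.
Proof.
  intros HE HEcl HF HdF. apply closed_graph_bounded.
  - intros z1 z2. rewrite (blinD _ _ F HF), linear_appD; auto.
  - intros a z. rewrite (blinZ _ _ F HF), linear_appZ; auto.
  - intros u z v Hu Hv. apply (HEcl (fun n => F (u n)) (F z) v); auto.
    apply blin_seq_conv; auto.
Qed.

Lemma closed_resolvent_comp_bounded (Z W : CBanach) (T : Op Z Z) (E : Op Z W) lam R :
  linear_op E -> closed_op E -> (forall z, dom T z -> dom E z) -> is_resolvent T lam R ->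
  exists M, 0 <= M /\ forall z, vnorm (app E (R z)) <= M * vnorm z.
Proof.
  intros HE HEcl Hdom [HR [Hright _]]. apply closed_op_comp_bounded; auto.
  intro z. apply Hdom, (Hright z).
Qed.

Lemma bounded_linear_comb (X Y : CBanach) (f g : X -> Y) (a b c : Defs.C) :
  bounded_linear f -> bounded_linear g ->
  bounded_linear (fun x => vscal c (vadd (vscal a (f x)) (vscal b (g x)))).
Proof.
  intros Hf Hg. split; [|split].
  - intros x y. rewrite (blinD _ _ f Hf), (blinD _ _ g Hg), !vscal_distr_v, vadd_ACA.
    reflexivity.
  - intros d x. rewrite (blinZ _ _ f Hf), (blinZ _ _ g Hg), (vscalC _ a d), (vscalC _ b d),
      <- vscal_distr_v, vscalC. reflexivity.
  - destruct (blin_bound _ _ f Hf) as [Mf [Hf0 HMf]].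
    destruct (blin_bound _ _ g Hg) as [Mg [Hg0 HMg]].
    exists (Cnorm c * (Cnorm a * Mf + Cnorm b * Mg)). intro x.
    rewrite vnorm_scal, Rmult_assoc. apply Rmult_le_compat_l; [apply Cnorm_ge0|].
    eapply Rle_trans; [apply vnorm_triangle|]. rewrite !vnorm_scal.
    specialize (HMf x). specialize (HMg x).
    pose proof (Cnorm_ge0 a). pose proof (Cnorm_ge0 b). pose proof (vnorm_ge0 _ x).
    assert (Cnorm a * vnorm (f x) <= Cnorm a * (Mf * vnorm x)) by (apply Rmult_le_compat_l; auto).
    assert (Cnorm b * vnorm (g x) <= Cnorm b * (Mg * vnorm x)) by (apply Rmult_le_compat_l; auto).
    nra.
Qed.

Lemma in_graph_closure_lipschitz (X Y : CBanach) (T : Op X Y) (G : X -> Y) L :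
  densely_defined T -> 0 <= L ->
  (forall x x', vnorm (vsub (G x) (G x')) <= L * vnorm (vsub x x')) ->
  (forall x, dom T x -> app T x = G x) ->
  forall x y, in_graph_closure T x y <-> y = G x.
Proof.
  intros Hdense HL HG HTG x y.
  assert (Hdelta : forall e, 0 < e -> 0 < e / (L + 1) /\ e / (L + 1) + L * (e / (L + 1)) = e).
  { intros e He. split; [apply Rdiv_lt_0_compat; lra|field; lra]. }
  split.
  - intro Hcl. apply vsub_eq0, vnorm_le_eps. intros e He. destruct (Hdelta e He) as [Hd He'].
    destruct (Hcl (e / (L + 1)) Hd) as [x' [Hx' [Hxx' Hyx']]].
    rewrite HTG in Hyx' by exact Hx'. pose proof (HG x' x). rewrite vnorm_subC in Hxx'.
    pose proof (vnorm_sub_triangle _ y (G x') (G x)).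
    assert (L * vnorm (vsub x' x) <= L * (e / (L + 1))) by (apply Rmult_le_compat_l; lra).
    lra.
  - intros -> e He. destruct (Hdelta e He) as [Hd He'].
    destruct (Hdense x (e / (L + 1)) Hd) as [x' [Hx' Hxx']].
    exists x'. rewrite HTG by exact Hx'. pose proof (HG x x').
    assert (L * vnorm (vsub x x') <= L * (e / (L + 1))) by (apply Rmult_le_compat_l; lra).
    repeat split; [exact Hx'| |]; nra.
Qed.

(** * The resolvents of [AB] and [BA] *)

Section Products.
Variables X Y : CBanach.
Variable A : Op X Y.
Variable B : Op Y X.
Hypothesis hA : linear_op A.
Hypothesis hB : linear_op B.

(* If [BA v = lam v] then [AB (A v) = lam (A v)], so [A v = 0] and [lam v = B (A v) = 0]. *)
Lemma BA_shift_injective lam R1 v :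
  lam <> C0 -> is_resolvent (op_comp A B) lam R1 ->
  dom (op_comp B A) v -> vsub (app (op_comp B A) v) (vscal lam v) = vzero -> v = vzero.
Proof.
  intros Hlam [HR1 [_ Hleft]] [HvA HvB] Heig. simpl in Heig. apply vsub_eq0 in Heig.
  set (u := app A v) in *.
  assert (Hu : dom (op_comp A B) u).
  { split; [exact HvB|]. simpl. rewrite Heig. apply linear_domZ; auto. }
  specialize (Hleft u Hu). simpl in Hleft.
  rewrite Heig, (linear_appZ _ _ A hA), vsub_self, (blin0 _ _ R1 HR1) in Hleft by exact HvA.
  rewrite <- Hleft, (linear_app0 _ _ B hB) in Heig.
  rewrite <- (vscalK _ lam v Hlam), <- Heig. apply vscal_v0.
Qed.

Lemma BRA_eq lam R1 R :
  is_resolvent (op_comp A B) lam R1 -> is_resolvent (op_comp B A) lam R ->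
  forall x, dom A x -> app B (R1 (app A x)) = vadd (vscal lam (R x)) x.
Proof.
  intros [_ [HR1 _]] [HR [_ Hleft]] x Hx.
  destruct (HR1 (app A x)) as [[HuB HuA] Hu]. simpl in Hu.
  set (u := R1 (app A x)) in *. set (z := app B u) in *.
  apply vsub_move in Hu.
  (* [(BA - lam) (z - x) = lam x], hence [z - x = lam R x] *)
  assert (HAv : app A (vsub z x) = vscal lam u).
  { rewrite linear_appB, Hu, vadd_comm, vsub_addKr by auto. reflexivity. }
  assert (Hv : dom (op_comp B A) (vsub z x)).
  { split; [apply linear_domB; auto|]. rewrite HAv. apply linear_domZ; auto. }
  specialize (Hleft _ Hv). simpl in Hleft.
  rewrite HAv, linear_appZ, vscal_sub, vsub_subKr, (blinZ _ _ R HR) in Hleft by auto.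
  symmetry in Hleft. apply vsub_move in Hleft. exact Hleft.
Qed.

Definition BA_resolvent_formula lam mu (R1 : Y -> Y) (S : X -> X) (x : X) : X :=
  vscal (Cinv lam)
    (vadd (vscal mu (S x)) (vscal (Csub lam mu) (app B (R1 (app A (S x)))))).

Lemma BA_resolvent_formula_right_inverse lam mu R1 S :
  lam <> C0 -> is_resolvent (op_comp A B) lam R1 -> is_resolvent (op_comp B A) mu S ->
  forall x, dom (op_comp B A) (BA_resolvent_formula lam mu R1 S x) /\
    vsub (app (op_comp B A) (BA_resolvent_formula lam mu R1 S x))
         (vscal lam (BA_resolvent_formula lam mu R1 S x)) = x.
Proof.
  intros Hlam [_ [HR1 _]] [_ [HS _]] x. unfold BA_resolvent_formula.
  pose proof (linear_op_comp B A hB hA) as HBA.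
  destruct (HS x) as [Hw Hwx]. set (w := S x) in *.
  destruct (HR1 (app A w)) as [[HuB HuA] Hu]. simpl in Hu.
  set (u := R1 (app A w)) in *. set (z := app B u) in *.
  apply vsub_move in Hu.
  assert (Hz : dom (op_comp B A) z) by (split; [exact HuA|]; rewrite Hu; apply linear_domD; [auto|apply Hw|apply linear_domZ; auto]).
  assert (HBAz : app (op_comp B A) z = vadd (app (op_comp B A) w) (vscal lam z)).
  { simpl. rewrite Hu, linear_appD, linear_appZ; auto; [apply Hw|apply linear_domZ; auto]. }
  assert (Hcomb : dom (op_comp B A) (vadd (vscal mu w) (vscal (Csub lam mu) z)))
    by (apply linear_domD; auto; apply linear_domZ; auto).
  split; [apply linear_domZ; auto|].
  rewrite (linear_appZ _ _ _ HBA), (linear_appD _ _ _ HBA), !(linear_appZ _ _ _ HBA), HBAz;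
    auto; try (apply linear_domZ; auto).
  set (p := app (op_comp B A) w) in *. set (c := Csub lam mu).
  rewrite (vscal_distr_v c p), vadd_assoc, <- vscal_distr_s, vscal_assoc.
  replace (Cadd mu c) with lam by (unfold c; apply C_ext; simpl; ring).
  rewrite vscal_distr_v, !vscal_assoc, CmulVl, vscal_1 by exact Hlam.
  replace (Cmul (Cinv lam) (Cmul c lam)) with c.
  2:{ pose proof (Cnorm2_gt0 lam Hlam). destruct lam as [l1 l2]. cbn [Re Im] in *.
      apply C_ext; unfold c, Cmul, Cinv, Csub, Cadd, Copp; cbn [Re Im]; field; lra. }
  rewrite CmulV, vscal_1 by exact Hlam.
  rewrite vsub_add_split, vsub_self, vadd_0. exact Hwx.
Qed.

Section BoundedFactors.
Variables (lam mu : Defs.C) (R1 : Y -> Y) (S : X -> X) (KB KA : R).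
Hypothesis HR1 : is_resolvent (op_comp A B) lam R1.
Hypothesis HS : is_resolvent (op_comp B A) mu S.
Hypothesis HKB : 0 <= KB.
Hypothesis HBR1 : forall y, vnorm (app B (R1 y)) <= KB * vnorm y.
Hypothesis HAS : forall x, vnorm (app A (S x)) <= KA * vnorm x.

Lemma BRAS_bound x : vnorm (app B (R1 (app A (S x)))) <= KB * KA * vnorm x.
Proof.
  eapply Rle_trans; [apply HBR1|]. rewrite Rmult_assoc.
  apply Rmult_le_compat_l; [exact HKB|apply HAS].
Qed.

Lemma BRAS_bounded_linear : bounded_linear (fun x => app B (R1 (app A (S x)))).
Proof.
  destruct HR1 as [HR1b [HR1r _]], HS as [HSb [HSr _]].
  assert (HdA : forall x, dom A (S x)) by (intro x; apply (HSr x)).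
  assert (HdB : forall y, dom B (R1 y)) by (intro y; apply (HR1r y)).
  split; [|split; [|exists (KB * KA); exact BRAS_bound]].
  - intros x y. rewrite (blinD _ _ S HSb), linear_appD, (blinD _ _ R1 HR1b), linear_appD by auto.
    reflexivity.
  - intros a x. rewrite (blinZ _ _ S HSb), linear_appZ, (blinZ _ _ R1 HR1b), linear_appZ by auto.
    reflexivity.
Qed.

Lemma is_resolvent_BA_formula :
  lam <> C0 -> is_resolvent (op_comp B A) lam (BA_resolvent_formula lam mu R1 S).
Proof.
  intro Hlam. pose proof (linear_op_comp B A hB hA) as HBA.
  pose proof (BA_resolvent_formula_right_inverse lam mu R1 S Hlam HR1 HS) as Hright.
  split; [|split; [exact Hright|]].
  - exact (bounded_linear_comb _ _ S _ mu (Csub lam mu) (Cinv lam) (proj1 HS) BRAS_bounded_linear).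
  - (* a right inverse of the injective [BA - lam] is also a left inverse *)
    intros x Hx. destruct (Hright (vsub (app (op_comp B A) x) (vscal lam x))) as [Hd He].
    apply vsub_eq0, (BA_shift_injective lam R1 _ Hlam HR1); [apply linear_domB; auto|].
    rewrite (linear_appB _ _ _ HBA), vscal_sub, vsub_sub_split, He by auto. apply vsub_self.
Qed.

Lemma BA_resolvent_formula_bound x :
  lam <> C0 ->
  Cnorm lam * vnorm (BA_resolvent_formula lam mu R1 S x) <=
  (Cnorm mu * opnorm S + Cnorm (Csub lam mu) * (KB * KA)) * vnorm x.
Proof.
  intro Hlam. unfold BA_resolvent_formula.
  rewrite <- vnorm_scal, vscal_assoc, CmulV, vscal_1 by exact Hlam.
  eapply Rle_trans; [apply vnorm_triangle|]. rewrite !vnorm_scal.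
  pose proof (opnorm_bound _ _ S (proj1 HS) x). pose proof (BRAS_bound x).
  pose proof (Cnorm_ge0 mu). pose proof (Cnorm_ge0 (Csub lam mu)).
  assert (Cnorm mu * vnorm (S x) <= Cnorm mu * (opnorm S * vnorm x))
    by (apply Rmult_le_compat_l; auto).
  assert (Cnorm (Csub lam mu) * vnorm (app B (R1 (app A (S x)))) <=
          Cnorm (Csub lam mu) * (KB * KA * vnorm x)) by (apply Rmult_le_compat_l; auto).
  nra.
Qed.

End BoundedFactors.

(* On [dom A], [B (AB - lam)^-1 A] coincides with the bounded map [lam (BA - lam)^-1 + I]. *)
Lemma graph_closure_BRA lam R1 R :
  densely_defined A -> is_resolvent (op_comp A B) lam R1 -> is_resolvent (op_comp B A) lam R ->
  forall x y, in_graph_closure (mkOp (dom A) (fun x => app B (R1 (app A x)))) x y <->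
    y = vadd (vscal lam (R x)) x.
Proof.
  intros Hdense HR1 HR. pose proof (proj1 HR) as HRb.
  apply (in_graph_closure_lipschitz _ _ _ _ (Cnorm lam * opnorm R + 1)).
  - exact Hdense.
  - pose proof (Cnorm_ge0 lam). pose proof (opnorm_ge0 _ _ R HRb). nra.
  - intros x x'. rewrite vsub_add_split, <- vscal_sub, <- (blinB _ _ R HRb).
    eapply Rle_trans; [apply vnorm_triangle|]. rewrite vnorm_scal.
    pose proof (opnorm_bound _ _ R HRb (vsub x x')). pose proof (Cnorm_ge0 lam).
    assert (Cnorm lam * vnorm (R (vsub x x')) <= Cnorm lam * (opnorm R * vnorm (vsub x x')))
      by (apply Rmult_le_compat_l; auto).
    nra.
  - exact (BRA_eq lam R1 R HR1 HR).
Qed.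

End Products.

Section ClosedFactors.
Variables X Y : CBanach.
Variable A : Op X Y.
Variable B : Op Y X.
Hypothesis hA : linear_op A.
Hypothesis hAcl : closed_op A.
Hypothesis hB : linear_op B.
Hypothesis hBcl : closed_op B.

Lemma is_resolvent_BA_of_AB lam mu R1 S :
  lam <> C0 -> is_resolvent (op_comp A B) lam R1 -> is_resolvent (op_comp B A) mu S ->
  is_resolvent (op_comp B A) lam (BA_resolvent_formula X Y A B lam mu R1 S).
Proof.
  intros Hlam HR1 HS.
  destruct (closed_resolvent_comp_bounded _ _ (op_comp A B) B lam R1 hB hBcl (fun y Hy => proj1 Hy) HR1)
    as [KB [HKB HBR1]].
  destruct (closed_resolvent_comp_bounded _ _ (op_comp B A) A mu S hA hAcl (fun x Hx => proj1 Hx) HS)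
    as [KA [_ HAS]].
  exact (is_resolvent_BA_formula X Y A B hA hB lam mu R1 S KB KA HR1 HS HKB HBR1 HAS Hlam).
Qed.

Lemma rho_BA_of_rho_AB lam :
  lam <> C0 -> (exists mu, in_rho (op_comp B A) mu) ->
  in_rho (op_comp A B) lam -> in_rho (op_comp B A) lam.
Proof.
  intros Hlam [mu [S HS]] [R1 HR1].
  exists (BA_resolvent_formula X Y A B lam mu R1 S). exact (is_resolvent_BA_of_AB _ _ _ _ Hlam HR1 HS).
Qed.

Lemma resolvent_BA_eq_formula lam mu R1 S R :
  lam <> C0 -> is_resolvent (op_comp A B) lam R1 -> is_resolvent (op_comp B A) mu S ->
  is_resolvent (op_comp B A) lam R ->
  forall x, R x = BA_resolvent_formula X Y A B lam mu R1 S x.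
Proof.
  intros Hlam HR1 HS HR.
  exact (is_resolvent_unique _ _ _ _ _ HR (is_resolvent_BA_of_AB _ _ _ _ Hlam HR1 HS)).
Qed.

End ClosedFactors.

(** * The resolvent estimate *)

Lemma affine_le_Rmax (a L q m : R) :
  0 <= a -> 0 <= L -> 0 <= m -> 0 <= q -> q <= a + L ->
  1 + q * m <= Rmax 1 m * ((1 + L) * (2 + a)).
Proof.
  intros. pose proof (Rmax_l 1 m). pose proof (Rmax_r 1 m). set (M := Rmax 1 m) in *.
  assert (q * m <= (a + L) * M) by (apply Rmult_le_compat; lra).
  assert (0 <= M * (1 + L + a * L)) by (apply Rmult_le_pos; nra).
  nra.
Qed.

(* [q1], [q2] stand for [|lam - l0|], [|mu - m0|], bounded by the triangle inequality. *)
Lemma resolvent_estimate_arith (a b c L0 N0 KB KA m1 m2 q1 q2 : R) :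
  0 <= a -> 0 <= b -> 0 <= c -> 0 <= L0 -> 0 <= N0 -> 0 <= KB -> 0 <= KA ->
  0 <= m1 -> 0 <= m2 -> 0 <= q1 -> q1 <= a + L0 -> 0 <= q2 -> q2 <= b + N0 ->
  b * m2 + c * (KB * (1 + q1 * m1) * (KA * (1 + q2 * m2))) <=
  (KB * KA * (1 + L0) * (1 + N0) + 1) * Rmax 1 m1 * Rmax 1 m2 * (b + c * (2 + a) * (2 + b)).
Proof.
  intros. assert (h1 := affine_le_Rmax a L0 q1 m1 ltac:(lra) ltac:(lra) ltac:(lra) ltac:(lra) ltac:(lra)).
  assert (h2 := affine_le_Rmax b N0 q2 m2 ltac:(lra) ltac:(lra) ltac:(lra) ltac:(lra) ltac:(lra)).
  pose proof (Rmax_l 1 m1). pose proof (Rmax_l 1 m2). pose proof (Rmax_r 1 m2).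
  set (M1 := Rmax 1 m1) in *. set (M2 := Rmax 1 m2) in *.
  set (K := KB * KA * (1 + L0) * (1 + N0)).
  assert (HK : 0 <= K) by (unfold K; repeat apply Rmult_le_pos; lra).
  assert (hprod : KB * (1 + q1 * m1) * (KA * (1 + q2 * m2)) <= K * (M1 * M2) * ((2 + a) * (2 + b))).
  { apply Rle_trans with (KB * (M1 * ((1 + L0) * (2 + a))) * (KA * (M2 * ((1 + N0) * (2 + b))))).
    - assert (0 <= q1 * m1) by nra. assert (0 <= q2 * m2) by nra.
      apply Rmult_le_compat; [nra|nra|apply Rmult_le_compat_l; auto|apply Rmult_le_compat_l; auto].
    - right. unfold K. ring. }
  assert (c * (KB * (1 + q1 * m1) * (KA * (1 + q2 * m2))) <= c * ((K + 1) * (M1 * M2) * ((2 + a) * (2 + b)))).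
  { assert (0 <= M1 * M2 * ((2 + a) * (2 + b))) by (apply Rmult_le_pos; nra).
    apply Rmult_le_compat_l; [exact H1|nra]. }
  assert (1 <= (K + 1) * M1) by nra.
  assert (b * m2 <= b * ((K + 1) * (M1 * M2))) by (apply Rmult_le_compat_l; nra).
  nra.
Qed.

Lemma resolvent_BA_norm_bound (X Y : CBanach) (A : Op X Y) (B : Op Y X)
    l0 m0 R0 S0 KB KA lam mu R1 R2 R :
  linear_op A -> closed_op A -> linear_op B -> closed_op B ->
  is_resolvent (op_comp A B) l0 R0 -> is_resolvent (op_comp B A) m0 S0 -> 0 <= KB -> 0 <= KA ->
  (forall y, vnorm (app B (R0 y)) <= KB * vnorm y) ->
  (forall x, vnorm (app A (S0 x)) <= KA * vnorm x) ->
  lam <> C0 -> is_resolvent (op_comp A B) lam R1 -> is_resolvent (op_comp B A) mu R2 ->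
  is_resolvent (op_comp B A) lam R ->
  Cnorm lam * opnorm R <=
  Cnorm mu * opnorm R2 + Cnorm (Csub lam mu) *
    (KB * (1 + Cnorm (Csub lam l0) * opnorm R1) * (KA * (1 + Cnorm (Csub mu m0) * opnorm R2))).
Proof.
  intros hA hAcl hB hBcl HR0 HS0 HKB HKA HBR0 HAS0 Hlam HR1 HR2 HR.
  pose proof (Cnorm_gt0 lam Hlam).
  pose proof (opnorm_ge0 _ _ R1 (proj1 HR1)). pose proof (opnorm_ge0 _ _ R2 (proj1 HR2)).
  pose proof (Cnorm_ge0 (Csub lam l0)). pose proof (Cnorm_ge0 (Csub mu m0)).
  set (KB' := KB * (1 + Cnorm (Csub lam l0) * opnorm R1)).
  set (KA' := KA * (1 + Cnorm (Csub mu m0) * opnorm R2)).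
  assert (HKB' : 0 <= KB') by (unfold KB'; apply Rmult_le_pos; nra).
  assert (HKA' : 0 <= KA') by (unfold KA'; apply Rmult_le_pos; nra).
  set (c := Cnorm mu * opnorm R2 + Cnorm (Csub lam mu) * (KB' * KA')).
  assert (Hc : 0 <= c).
  { pose proof (Cnorm_ge0 mu). pose proof (Cnorm_ge0 (Csub lam mu)). unfold c.
    apply Rplus_le_le_0_compat; apply Rmult_le_pos; nra. }
  enough (Hdiv : opnorm R <= c / Cnorm lam).
  { apply (Rmult_le_compat_l (Cnorm lam)) in Hdiv; [|lra].
    replace (Cnorm lam * (c / Cnorm lam)) with c in Hdiv by (field; lra). exact Hdiv. }
  apply opnorm_le; [exact (proj1 HR)|unfold Rdiv; apply Rmult_le_pos; [lra|left; apply Rinv_0_lt_compat; lra]|].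
  intro x. rewrite (resolvent_BA_eq_formula X Y A B hA hAcl hB hBcl lam mu R1 R2 R Hlam HR1 HR2 HR x).
  pose proof (BA_resolvent_formula_bound X Y A B lam mu R1 R2 KB' KA' HR2 HKB'
    (resolvent_comp_bound _ _ _ (app B) lam l0 R1 R0 KB HR1 HR0 HKB HBR0)
    (resolvent_comp_bound _ _ _ (app A) mu m0 R2 S0 KA HR2 HS0 HKA HAS0) x Hlam) as Hbound.
  apply Rmult_le_reg_l with (Cnorm lam); [lra|].
  replace (Cnorm lam * (c / Cnorm lam * vnorm x)) with (c * vnorm x) by (field; lra).
  exact Hbound.
Qed.

Lemma resolvent_BA_estimate (X Y : CBanach) (A : Op X Y) (B : Op Y X) l0 m0 R0 S0 :
  linear_op A -> closed_op A -> linear_op B -> closed_op B ->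
  is_resolvent (op_comp A B) l0 R0 -> is_resolvent (op_comp B A) m0 S0 ->
  exists Cst, Cst > 0 /\
    forall lam mu (R1 : Y -> Y) (R2 R : X -> X),
      lam <> C0 ->
      is_resolvent (op_comp A B) lam R1 ->
      is_resolvent (op_comp B A) mu R2 ->
      is_resolvent (op_comp B A) lam R ->
      opnorm R <= Cst * Rmax 1 (opnorm R1) * Rmax 1 (opnorm R2) / Cnorm lam *
                  (Cnorm mu + Cnorm (Csub lam mu) * (2 + Cnorm lam) * (2 + Cnorm mu)).
Proof.
  intros hA hAcl hB hBcl HR0 HS0.
  destruct (closed_resolvent_comp_bounded _ _ (op_comp A B) B l0 R0 hB hBcl (fun y Hy => proj1 Hy) HR0)
    as [KB [HKB HBR0]].
  destruct (closed_resolvent_comp_bounded _ _ (op_comp B A) A m0 S0 hA hAcl (fun x Hx => proj1 Hx) HS0)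
    as [KA [HKA HAS0]].
  pose proof (Cnorm_ge0 l0). pose proof (Cnorm_ge0 m0).
  exists (KB * KA * (1 + Cnorm l0) * (1 + Cnorm m0) + 1). split.
  { assert (0 <= KB * KA * (1 + Cnorm l0) * (1 + Cnorm m0)) by (repeat apply Rmult_le_pos; lra).
    lra. }
  intros lam mu R1 R2 R Hlam HR1 HR2 HR.
  pose proof (resolvent_BA_norm_bound X Y A B l0 m0 R0 S0 KB KA lam mu R1 R2 R
                hA hAcl hB hBcl HR0 HS0 HKB HKA HBR0 HAS0 Hlam HR1 HR2 HR) as Hnorm.
  pose proof (resolvent_estimate_arith (Cnorm lam) (Cnorm mu) (Cnorm (Csub lam mu))
                (Cnorm l0) (Cnorm m0) KB KA (opnorm R1) (opnorm R2)
                (Cnorm (Csub lam l0)) (Cnorm (Csub mu m0))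
                (Cnorm_ge0 _) (Cnorm_ge0 _) (Cnorm_ge0 _) H H0 HKB HKA
                (opnorm_ge0 _ _ R1 (proj1 HR1)) (opnorm_ge0 _ _ R2 (proj1 HR2))
                (Cnorm_ge0 _) (Cnorm_sub_le lam l0) (Cnorm_ge0 _) (Cnorm_sub_le mu m0)) as Harith.
  pose proof (Cnorm_gt0 lam Hlam).
  unfold Rdiv. rewrite (Rmult_comm _ (/ Cnorm lam)), Rmult_assoc.
  apply Rmult_le_reg_l with (Cnorm lam); [lra|].
  rewrite <- Rmult_assoc, Rinv_r, Rmult_1_l by lra. lra.
Qed.

Theorem theorem1p3 (X Y : CBanach) (A : Op X Y) (B : Op Y X)
  (hAlin : linear_op A) (hAcl : closed_op A) (hAd : densely_defined A)
  (hBlin : linear_op B) (hBcl : closed_op B) (hBd : densely_defined B)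
  (hrhoAB : exists l, in_rho (op_comp A B) l)
  (hrhoBA : exists l, in_rho (op_comp B A) l) :
  (* sigma(AB) \ {0} = sigma(BA) \ {0} *)
  (forall lam, lam <> C0 -> (in_rho (op_comp A B) lam <-> in_rho (op_comp B A) lam)) /\
  (* resolvent formulas *)
  (forall lam mu (R1 : Y -> Y) (R2 R : X -> X),
     lam <> C0 ->
     is_resolvent (op_comp A B) lam R1 ->
     is_resolvent (op_comp B A) mu R2 ->
     is_resolvent (op_comp B A) lam R ->
     (* the closure of B (AB - lam)^{-1} A (on dom A) is everywhere defined
        and equals lam (BA - lam)^{-1} + I *)
     (forall x y,
        in_graph_closure (mkOp (dom A) (fun x => app B (R1 (app A x)))) x y <->
        y = vadd (vscal lam (R x)) x) /\
     (forall x, R x = vscal (Cinv lam) (vadd (vscal mu (R2 x))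
                        (vscal (Csub lam mu) (app B (R1 (app A (R2 x)))))))) /\
  (* resolvent estimate *)
  (exists Cst, Cst > 0 /\
     forall lam mu (R1 : Y -> Y) (R2 R : X -> X),
       lam <> C0 ->
       is_resolvent (op_comp A B) lam R1 ->
       is_resolvent (op_comp B A) mu R2 ->
       is_resolvent (op_comp B A) lam R ->
       opnorm R <= Cst * Rmax 1 (opnorm R1) * Rmax 1 (opnorm R2) / Cnorm lam *
                   (Cnorm mu + Cnorm (Csub lam mu) * (2 + Cnorm lam) * (2 + Cnorm mu))).
Proof.
  split; [|split].
  - intros lam Hlam. split.
    + exact (rho_BA_of_rho_AB X Y A B hAlin hAcl hBlin hBcl lam Hlam hrhoBA).
    + exact (rho_BA_of_rho_AB Y X B A hBlin hBcl hAlin hAcl lam Hlam hrhoAB).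
  - intros lam mu R1 R2 R Hlam HR1 HR2 HR. split.
    + exact (graph_closure_BRA X Y A B hAlin hBlin lam R1 R hAd HR1 HR).
    + exact (resolvent_BA_eq_formula X Y A B hAlin hAcl hBlin hBcl lam mu R1 R2 R Hlam HR1 HR2 HR).
  - destruct hrhoAB as [l0 [R0 HR0]], hrhoBA as [m0 [S0 HS0]].
    exact (resolvent_BA_estimate X Y A B l0 m0 R0 S0 hAlin hAcl hBlin hBcl HR0 HS0).
Qed.
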